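(* Let $(A,B)$ be an admissible pair of $n\times n$ complex matrices and put $r_A=\mathrm{rank}(A)$, $r_B=\mathrm{rank}(B)$. Then $m:=r_A+r_B-n\ge 0$, and there exists a permutation $\Pi$ of $\{1,\dots,n\}$ such that the boundary condition $A\Psi+B\Psi'=0$ is equivalent (i.e. has exactly the same solution pairs $(\Psi,\Psi')\in\mathbb C^n\times\mathbb C^n$) to the PQRS-form condition $$B_{PQRS}\tilde\Psi'=A_{PQRS}\tilde\Psi,\qquad \tilde\Psi=(\psi_{\Pi(1)}(0),\dots,\psi_{\Pi(n)}(0))^T,\ \tilde\Psi'=(\psi'_{\Pi(1)}(0),\dots,\psi'_{\Pi(n)}(0))^T,$$ for some matrices $P\in\mathbb C^{m\times(n-r_B)}$, $Q\in\mathbb C^{(n-r_A)\times(n-r_B)}$, $R\in\mathbb C^{(n-r_A)\times m}$ and some invertible self-adjoint $S\in\mathbb C^{m\times m}$. For a given admissible permutation $\Pi$, the matrices $P,Q,R,S$ (with $S$ invertible self-adjoint) are uniquely determined; choosing the lexicographically smallest admissible $\Pi$ makes the representation unique.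
   Context: A vertex coupling at a vertex of degree $n$ of a quantum graph is given by boundary conditions $A\Psi+B\Psi'=0$, where $A,B\in\mathbb C^{n\times n}$ and $\Psi=(\psi_1(0),\dots,\psi_n(0))^T$, $\Psi'=(\psi_1'(0),\dots,\psi_n'(0))^T$ are the vectors of boundary values and boundary derivatives of the wave function on the $n$ edges at the vertex. The pair $(A,B)$ is called admissible if the $n\times 2n$ matrix $(A|B)$ has rank $n$ and $AB^*$ is self-adjoint. $I^{(j)}$ denotes the $j\times j$ identity matrix. With $m=r_A+r_B-n$, $a=n-r_A$, $b=n-r_B$, $S\in\mathbb C^{m\times m}$ self-adjoint, $P\in\mathbb C^{m\times b}$, $Q\in\mathbb C^{a\times b}$, $R\in\mathbb C^{a\times m}$, define the $n\times n$ block matrices (block sizes $m,a,b$) $$B_{PQRS}=\begin{pmatrix} I^{(m)} & 0 & P\\ R & I^{(a)} & Q\\ 0&0&0\end{pmatrix},\qquad A_{PQRS}=\begin{pmatrix} S & -SR^* & 0\\ 0&0&0\\ -P^* & (RP-Q)^* & I^{(b)}\end{pmatrix}.$$ *)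

(* Complex numbers are modelled by an arbitrary
   numClosedFieldType C (includes the complex numbers; conjugation is x^* ). *)
From HB Require Import structures.
From mathcomp Require Import all_boot all_order all_algebra all_fingroup.
Set Implicit Arguments. Unset Strict Implicit. Unset Printing Implicit Defensive.
Import Order.TTheory GRing.Theory Num.Theory.
Local Open Scope ring_scope.

Definition mxadj (C : numClosedFieldType) (p q : nat) (M : 'M[C]_(p, q)) : 'M[C]_(q, p) :=
  map_mx (fun x => x^*) M^T.

Definition selfadj (C : numClosedFieldType) (p : nat) (M : 'M[C]_p) : Prop :=
  mxadj M = M.

Definition admissible (C : numClosedFieldType) (n : nat) (A B : 'M[C]_n) : Prop :=
  \rank (row_mx A B) = n /\ selfadj (A *m mxadj B).

Definition Bpqrs (C : numClosedFieldType) (m a b : nat)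
  (P : 'M[C]_(m, b)) (Q : 'M[C]_(a, b)) (R : 'M[C]_(a, m)) : 'M[C]_(m + a + b) :=
  block_mx (block_mx 1%:M 0 R 1%:M) (col_mx P Q) 0 0.

Definition Apqrs (C : numClosedFieldType) (m a b : nat)
  (P : 'M[C]_(m, b)) (Q : 'M[C]_(a, b)) (R : 'M[C]_(a, m)) (S : 'M[C]_m)
  : 'M[C]_(m + a + b) :=
  block_mx (block_mx S (- (S *m mxadj R)) 0 0) 0
           (row_mx (- mxadj P) (mxadj (R *m P - Q))) 1%:M.

(* The block matrices have size m+a+b, which equals n
   whenever n <= rank A + rank B; conform_mx transports them to size n. *)
Definition pqrs_rep (C : numClosedFieldType) (n : nat) (A B : 'M[C]_n) (s : 'S_n)
  (P : 'M[C]_(\rank A + \rank B - n, n - \rank B))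
  (Q : 'M[C]_(n - \rank A, n - \rank B))
  (R : 'M[C]_(n - \rank A, \rank A + \rank B - n))
  (S : 'M[C]_(\rank A + \rank B - n)) : Prop :=
  [/\ S \in unitmx, selfadj S &
   forall X Y : 'cV[C]_n,
     A *m X + B *m Y = 0 <->
     conform_mx (0 : 'M[C]_n) (Bpqrs P Q R) *m row_perm s Y =
     conform_mx (0 : 'M[C]_n) (Apqrs P Q R S) *m row_perm s X].
Arguments pqrs_rep {C n} A B s P Q R S.

From HB Require Import structures.
From mathcomp Require Import all_boot all_order all_algebra all_fingroup.
From mathcomp Require Import zify.
Set Implicit Arguments. Unset Strict Implicit. Unset Printing Implicit Defensive.
Import Order.TTheory GRing.Theory Num.Theory.
Local Open Scope ring_scope.

(* Left multiplication of A and B by an invertible G, together with the same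
   column permutation of both, preserves admissibility and, after relabelling
   the edges, the solution set of A Psi + B Psi' = 0.  Gaussian elimination
   brings B to [1 K; 0 0]; then A B^* self-adjoint and rank (A|B) = n allow A
   to be normalised to [H 0; K^* -1] with H self-adjoint of rank
   m = rank A + rank B - n.  A self-adjoint matrix of rank m has an invertible
   principal m x m submatrix H11; once it is moved to the upper left corner
   the Schur complement of H11 in H vanishes, which is exactly the PQRS form
   with S = -H11 and R = -H21 H11^-1.  For uniqueness, the solutions with
   Psi~ = (x, 0, P^* x) and those with Psi~ = 0 already determine S, P, R and
   then Q. *)

Section ConjugateTranspose.
Variable C : numClosedFieldType.

Lemma mxadjK p q (M : 'M[C]_(p, q)) : mxadj (mxadj M) = M.
Proof.
rewrite /mxadj map_trmx trmxK -map_mx_comp; apply: map_mx_id => x /=.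
exact: conjCK.
Qed.

Lemma mxadj_inj p q : injective (@mxadj C p q).
Proof. by move=> M N e; rewrite -[M]mxadjK e mxadjK. Qed.

Lemma mxadjM p q r (A : 'M[C]_(p, q)) (B : 'M[C]_(q, r)) :
  mxadj (A *m B) = mxadj B *m mxadj A.
Proof. by rewrite /mxadj trmx_mul map_mxM. Qed.

Lemma mxadjN p q (A : 'M[C]_(p, q)) : mxadj (- A) = - mxadj A.
Proof. by rewrite /mxadj linearN /= map_mxN. Qed.

Lemma mxadj0 p q : mxadj (0 : 'M[C]_(p, q)) = 0.
Proof. by rewrite /mxadj trmx0 map_mx0. Qed.

Lemma mxadj1 p : mxadj (1%:M : 'M[C]_p) = 1%:M.
Proof. by rewrite /mxadj trmx1 map_mx1. Qed.

Lemma mxadj_block p1 p2 q1 q2 (Aul : 'M[C]_(p1, q1)) (Aur : 'M[C]_(p1, q2))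
  (Adl : 'M[C]_(p2, q1)) (Adr : 'M[C]_(p2, q2)) :
  mxadj (block_mx Aul Aur Adl Adr)
  = block_mx (mxadj Aul) (mxadj Adl) (mxadj Aur) (mxadj Adr).
Proof. by rewrite /mxadj tr_block_mx map_block_mx. Qed.

Lemma mxadj_col p1 p2 q (Au : 'M[C]_(p1, q)) (Ad : 'M[C]_(p2, q)) :
  mxadj (col_mx Au Ad) = row_mx (mxadj Au) (mxadj Ad).
Proof. by rewrite /mxadj tr_col_mx map_row_mx. Qed.

Lemma mxadj_inv p (M : 'M[C]_p) : mxadj (invmx M) = invmx (mxadj M).
Proof. by rewrite /mxadj trmx_inv map_invmx. Qed.

Lemma mxrank_adj p q (M : 'M[C]_(p, q)) : \rank (mxadj M) = \rank M.
Proof. by rewrite /mxadj mxrank_map mxrank_tr. Qed.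

Lemma mxadj_perm p (s : 'S_p) : mxadj (perm_mx s : 'M[C]_p) = perm_mx s^-1.
Proof. by rewrite /mxadj tr_perm_mx map_perm_mx. Qed.

Lemma mxadj_rowsub p q k (f : 'I_k -> 'I_p) (M : 'M[C]_(p, q)) :
  mxadj (rowsub f M) = colsub f (mxadj M).
Proof. by apply/matrixP => i j; rewrite !mxE. Qed.

Lemma mul_col_perm_adj p q (s : 'S_q) (A B : 'M[C]_(p, q)) :
  col_perm s A *m mxadj (col_perm s B) = A *m mxadj B.
Proof.
rewrite !col_permE mxadjM mxadj_perm invgK -mulmxA (mulmxA (perm_mx s^-1)).
by rewrite -perm_mxM mulVg perm_mx1 mul1mx.
Qed.

Lemma selfadj_mul_adj p q (G : 'M[C]_(p, q)) (X : 'M[C]_q) :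
  selfadj X -> selfadj (G *m X *m mxadj G).
Proof. by rewrite /selfadj !mxadjM mxadjK => ->; rewrite mulmxA. Qed.

End ConjugateTranspose.

Section MatrixFacts.

Lemma lsubmx_block (R : Type) p1 p2 q1 q2 (Aul : 'M[R]_(p1, q1))
  (Aur : 'M[R]_(p1, q2)) (Adl : 'M[R]_(p2, q1)) (Adr : 'M[R]_(p2, q2)) :
  lsubmx (block_mx Aul Aur Adl Adr) = col_mx Aul Adl.
Proof. by rewrite block_mxEh row_mxKl. Qed.

Lemma rsubmx_block (R : Type) p1 p2 q1 q2 (Aul : 'M[R]_(p1, q1))
  (Aur : 'M[R]_(p1, q2)) (Adl : 'M[R]_(p2, q1)) (Adr : 'M[R]_(p2, q2)) :
  rsubmx (block_mx Aul Aur Adl Adr) = col_mx Aur Adr.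
Proof. by rewrite block_mxEh row_mxKr. Qed.

Lemma dsubmx_row (R : Type) p1 p2 q1 q2 (X : 'M[R]_(p1 + p2, q1))
  (Y : 'M[R]_(p1 + p2, q2)) :
  dsubmx (row_mx X Y) = row_mx (dsubmx X) (dsubmx Y).
Proof. by apply/matrixP => i j; rewrite !mxE; case: splitP => k _; rewrite !mxE. Qed.

Lemma col_perm_col (R : Type) p1 p2 q (s : 'S_q) (X : 'M[R]_(p1, q))
  (Y : 'M[R]_(p2, q)) :
  col_perm s (col_mx X Y) = col_mx (col_perm s X) (col_perm s Y).
Proof. by apply/matrixP => i j; rewrite !mxE; case: splitP => k _; rewrite !mxE. Qed.

Lemma col_perm_mulmx (R : pzSemiRingType) p q r (s : 'S_r) (X : 'M[R]_(p, q))
  (Y : 'M[R]_(q, r)) :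
  col_perm s (X *m Y) = X *m col_perm s Y.
Proof. by rewrite !col_permE mulmxA. Qed.

Lemma mul_col_perm_row_perm (R : pzSemiRingType) p q r (s : 'S_q)
  (A : 'M[R]_(p, q)) (X : 'M[R]_(q, r)) :
  col_perm s A *m row_perm s X = A *m X.
Proof. by rewrite mul_col_perm -row_permM mulVg row_perm1. Qed.

Lemma row_permVK (R : Type) p q (s : 'S_p) (X : 'M[R]_(p, q)) :
  row_perm s (row_perm s^-1 X) = X.
Proof. by rewrite -row_permM mulgV row_perm1. Qed.

Variable F : fieldType.

Lemma mxrank_col_mx_le p1 p2 q (X : 'M[F]_(p1, q)) (Y : 'M[F]_(p2, q)) :
  (\rank (col_mx X Y) <= \rank X + \rank Y)%N.
Proof. by rewrite -addsmxE; exact: (mxrank_adds_leqif X Y).1. Qed.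

Lemma mxrank_mul_unitl p q (G : 'M[F]_p) (M : 'M[F]_(p, q)) :
  G \in unitmx -> \rank (G *m M) = \rank M.
Proof.
move=> Gu; rewrite -mxrank_tr trmx_mul mxrankMfree ?mxrank_tr //.
by rewrite row_free_unit unitmx_tr.
Qed.

Lemma mxrank_mul_unitr p q (G : 'M[F]_q) (M : 'M[F]_(p, q)) :
  G \in unitmx -> \rank (M *m G) = \rank M.
Proof. by move=> Gu; rewrite mxrankMfree // row_free_unit. Qed.

Lemma mulmx_cVP p q (M N : 'M[F]_(p, q)) :
  (forall x : 'cV_q, M *m x = N *m x) -> M = N.
Proof.
move=> eMN; apply: trmx_inj; apply/eqP/mulmxP => u.
by apply: trmx_inj; rewrite !trmx_mul !trmxK eMN.
Qed.

End MatrixFacts.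

Definition perm_row_equiv (F : fieldType) n (s : 'S_n) (A B A' B' : 'M[F]_n) :=
  exists2 G : 'M_n, G \in unitmx &
    G *m col_perm s A = A' /\ G *m col_perm s B = B'.

Lemma perm_row_equiv_trans (F : fieldType) n (s t : 'S_n)
  (A B A' B' A'' B'' : 'M[F]_n) :
  perm_row_equiv s A B A' B' -> perm_row_equiv t A' B' A'' B'' ->
  perm_row_equiv (t * s) A B A'' B''.
Proof.
move=> [G Gu [eA eB]] [H Hu [eA' eB']]; exists (H *m G); first by rewrite unitmx_mul Hu.
by rewrite !col_permM -!mulmxA -!(col_perm_mulmx t G) eA eB.
Qed.

Lemma perm_row_equiv_solutions (F : fieldType) n (s : 'S_n) (A B A' B' : 'M[F]_n) :
  perm_row_equiv s A B A' B' -> forall X Y : 'cV[F]_n,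
  A *m X + B *m Y = 0 <-> A' *m row_perm s X + B' *m row_perm s Y = 0.
Proof.
move=> [G Gu [<- <-]] X Y; rewrite -!mulmxA !mul_col_perm_row_perm -mulmxDr.
split=> [-> | eG]; first by rewrite mulmx0.
by rewrite -(mulKmx Gu (_ + _)) eG mulmx0.
Qed.

Lemma admissible_perm_row_equiv (C : numClosedFieldType) n (s : 'S_n)
  (A B A' B' : 'M[C]_n) :
  perm_row_equiv s A B A' B' -> admissible A B -> admissible A' B'.
Proof.
move=> [G Gu [<- <-]] [rAB sAB]; split.
  rewrite -mul_mx_row mxrank_mul_unitl //.
  have -> : row_mx (col_perm s A) (col_perm s B)
          = row_mx A B *m block_mx (perm_mx s^-1) 0 0 (perm_mx s^-1).
    by rewrite mul_row_block !mulmx0 addr0 add0r !col_permE.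
  by rewrite mxrank_mul_unitr // block_diag_mx_unit unitmx_perm.
by rewrite mxadjM mulmxA -(mulmxA G) mul_col_perm_adj; exact: selfadj_mul_adj.
Qed.

Lemma perm_extend p q (f : 'I_p -> 'I_(p + q)) : injective f ->
  exists s : 'S_(p + q), forall i, s (lshift q i) = f i.
Proof.
move=> finj; pose T := [set f i | i in 'I_p].
have cardTC : #|~: T| = q.
  have := cardsC T; rewrite card_imset // !card_ord => /eqP.
  by rewrite eqn_add2l => /eqP.
pose g (i : 'I_(p + q)) : 'I_(p + q) :=
  match split i with
  | inl j => f j
  | inr k => enum_val (cast_ord (esym cardTC) k)
  end.
have ginj : injective g.
  move=> i1 i2; rewrite /g.
  case: splitP => [j1 e1|k1 e1]; case: splitP => [j2 e2|k2 e2] eq;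
    apply: val_inj; rewrite /= e1 e2.
  - by rewrite (finj _ _ eq).
  - by have := enum_valP (cast_ord (esym cardTC) k2); rewrite -eq in_setC imset_f.
  - by have := enum_valP (cast_ord (esym cardTC) k1); rewrite eq in_setC imset_f.
  - by rewrite (cast_ord_inj (enum_val_inj eq)).
by exists (perm ginj) => i; rewrite permE /g (unsplitK (inl _ i)).
Qed.

Lemma col_perm_lsubmx (R : Type) p q (t : 'S_p) :
  exists s : 'S_(p + q), forall k (M : 'M[R]_(k, p + q)),
    col_perm s M = row_mx (col_perm t (lsubmx M)) (rsubmx M).
Proof.
pose g (i : 'I_(p + q)) : 'I_(p + q) :=
  match split i with inl j => lshift q (t j) | inr k => rshift p k end.
have ginj : injective g.
  move=> i1 i2; rewrite /g.
  case: splitP => [j1 e1|k1 e1]; case: splitP => [j2 e2|k2 e2] /(congr1 val) /= eq;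
    apply: val_inj; rewrite /= e1 e2.
  - by rewrite (perm_inj (val_inj eq)).
  - by move: (ltn_ord (t j1)); rewrite eq ltnNge leq_addr.
  - by move: (ltn_ord (t j2)); rewrite -eq ltnNge leq_addr.
  - by move/eqP: eq; rewrite eqn_add2l => /eqP ->.
exists (perm ginj) => k M; apply/matrixP => i j; rewrite !mxE permE /g.
by case: splitP => [j1 _|k1 _]; rewrite !mxE.
Qed.

Lemma full_rank_colsub_unit (F : fieldType) p q (M : 'M[F]_(p, q)) :
  \rank M = p -> exists2 f : 'I_p -> 'I_q, injective f & colsub f M \in unitmx.
Proof.
move=> rM; have := maxrowsub_free M^T; have := @maxrankfun_inj _ _ _ M^T.
move: (maxrankfun M^T); rewrite mxrank_tr rM => f finj ffree.
exists f => //; rewrite (_ : colsub f M = (rowsub f M^T)^T).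
  by rewrite unitmx_tr -row_free_unit.
by apply/matrixP => i j; rewrite !mxE.
Qed.

Lemma full_rank_col_perm (F : fieldType) r b (V : 'M[F]_(r, r + b)) :
  \rank V = r -> exists s : 'S_(r + b), exists2 W : 'M_r, W \in unitmx &
    exists K, col_perm s V = W *m row_mx 1%:M K.
Proof.
move=> rV; have [f finj Wu] := full_rank_colsub_unit rV.
have [s sf] := perm_extend finj.
exists s, (colsub f V) => //; exists (invmx (colsub f V) *m rsubmx (col_perm s V)).
rewrite mul_mx_row mulmx1 mulKVmx // -[LHS]hsubmxK; congr row_mx.
by apply/matrixP => i j; rewrite !mxE sf.
Qed.

Lemma rank_col_perm_form (F : fieldType) r b (B : 'M[F]_(r + b)) :
  \rank B = r -> exists (s : 'S_(r + b)) (G : 'M_(r + b)) K,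
    G \in unitmx /\ G *m col_perm s B = block_mx 1%:M K 0 0.
Proof.
move=> rB; set L := col_ebase B; set U := row_ebase B; pose V := usubmx U.
have Lu : L \in unitmx by exact: col_ebase_unit.
have Uu : U \in unitmx by exact: row_ebase_unit.
have eB : B = L *m col_mx V 0.
  rewrite -[B in LHS]mulmx_ebase rB -/L -/U -mulmxA (@pid_mx_block _ b b r).
  by rewrite -{1}(vsubmxK U) mul_block_col !mul1mx !mul0mx addr0 add0r.
have rV : \rank V = r.
  apply/eqP; rewrite eqn_leq rank_leq_row /= -(leq_add2r b).
  have := mxrank_col_mx_le V (dsubmx U); rewrite vsubmxK mxrank_unit // => rU.
  by apply: leq_trans rU _; rewrite leq_add2l rank_leq_row.
have [s [W Wu [K eV]]] := full_rank_col_perm rV.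
exists s, (block_mx (invmx W) 0 0 1%:M *m invmx L), K; split.
  by rewrite unitmx_mul unitmx_inv Lu block_diag_mx_unit unitmx_inv Wu unitmx1.
rewrite eB col_perm_mulmx -mulmxA mulKmx // col_perm_col linear0 eV.
by rewrite mul_block_col !mul0mx !mul1mx addr0 add0r mulKmx // block_mxEv row_mx0.
Qed.

Lemma full_rank_drsubmx_unit (F : fieldType) r b (A11 : 'M[F]_r) (A12 : 'M[F]_(r, b))
  (A22 : 'M[F]_b) (X : 'M[F]_(b, r)) (B1 : 'M[F]_r) (B2 : 'M[F]_(r, b)) :
  \rank (row_mx (block_mx A11 A12 (A22 *m X) A22) (block_mx B1 B2 0 0))
    = (r + b)%N ->
  A22 \in unitmx.
Proof.
set M := row_mx _ _ => rM.
have : (r + b <= r + \rank A22)%N.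
  rewrite -{1}rM -(vsubmxK M); apply: leq_trans (mxrank_col_mx_le _ _) _.
  apply: leq_add; first exact: rank_leq_row.
  rewrite dsubmx_row !block_mxEv !col_mxKd row_mx0 rank_row_mx0.
  by rewrite -[A22 in row_mx _ A22]mulmx1 -mul_mx_row mxrankM_maxl.
by rewrite leq_add2l -row_free_unit /row_free eqn_leq rank_leq_row.
Qed.

Lemma mxrank_block_opp1 (F : fieldType) p q (H : 'M[F]_p) (X : 'M[F]_(q, p)) :
  \rank (block_mx H 0 X (- 1%:M)) = (\rank H + q)%N.
Proof.
have -> : block_mx H 0 X (- 1%:M)
        = block_mx H 0 0 (- 1%:M) *m block_mx 1%:M 0 (- X) 1%:M.
  by rewrite mulmx_block !mulmx0 !mulmx1 !mul0mx ?addr0 ?add0r mulNmx mul1mx opprK.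
rewrite mxrank_mul_unitr; last by rewrite unitmxE det_lblock !det1 mulr1 unitr1.
by rewrite rank_diag_block_mx mxrank_opp mxrank1.
Qed.

Lemma schur_complement_eq0 (F : fieldType) m a (A11 : 'M[F]_m) (A12 : 'M[F]_(m, a))
  (A21 : 'M[F]_(a, m)) (A22 : 'M[F]_a) :
  A11 \in unitmx -> \rank (block_mx A11 A12 A21 A22) = m ->
  A22 = A21 *m invmx A11 *m A12.
Proof.
move=> A11u rA; apply/eqP; rewrite -subr_eq0 -mxrank_eq0 -(eqn_add2l m) addn0.
rewrite -{1}(mxrank_unit A11u) -rank_diag_block_mx.
pose E1 : 'M[F]_(m + a) := block_mx 1%:M 0 (- (A21 *m invmx A11)) 1%:M.
pose E2 : 'M[F]_(m + a) := block_mx 1%:M (- (invmx A11 *m A12)) 0 1%:M.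
have -> : block_mx A11 0 0 (A22 - A21 *m invmx A11 *m A12)
        = E1 *m block_mx A11 A12 A21 A22 *m E2.
  rewrite !mulmx_block !mul1mx !mul0mx !mulmx1 !mulmx0 !addr0 !mulNmx mulmxKV //.
  by rewrite addNr mul0mx add0r mulmxN mulmxA mulmxV // mul1mx addNr addrC.
rewrite mxrank_mul_unitr ?mxrank_mul_unitl ?rA //.
  by rewrite unitmxE det_lblock !det1 mulr1 unitr1.
by rewrite unitmxE det_ublock !det1 mulr1 unitr1.
Qed.

Lemma selfadj_principal_unit (C : numClosedFieldType) r m (H : 'M[C]_r) :
  selfadj H -> \rank H = m ->
  exists2 f : 'I_m -> 'I_r, injective f & colsub f (rowsub f H) \in unitmx.
Proof.
move=> sH rH; have := eq_maxrowsub H; have := maxrowsub_free H.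
have := @maxrankfun_inj _ _ _ H; move: (maxrankfun H); rewrite rH.
move=> f finj ffree eqH; exists f => //.
have [X eX] : exists X, H = X *m rowsub f H by apply/submxP; rewrite eqH.
have rHf : \rank (colsub f H) = m.
  by rewrite -[H in colsub f H]sH -mxadj_rowsub mxrank_adj; apply/eqP.
rewrite -row_free_unit /row_free eqn_leq rank_leq_row /= -{1}rHf {1}eX.
by rewrite -mulmx_colsub mxrankM_maxr.
Qed.

Lemma admissible_normal_form (C : numClosedFieldType) r b (A : 'M[C]_(r + b))
  (K : 'M[C]_(r, b)) :
  admissible A (block_mx 1%:M K 0 0) ->
  exists G H, [/\ G \in unitmx, selfadj H,
    G *m A = block_mx H 0 (mxadj K) (- 1%:M) &
    G *m block_mx 1%:M K 0 0 = block_mx 1%:M K 0 0].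
Proof.
rewrite -[A]submxK; set A11 := ulsubmx A; set A12 := ursubmx A.
set A21 := dlsubmx A; set A22 := drsubmx A; case=> rAB.
rewrite /selfadj mxadj_block mxadj1 !mxadj0 mulmx_block !mulmx0 !mulmx1 !addr0.
rewrite mxadj_block => /eq_block_mx [sH e12 _ _].
have e21 : A21 = A22 *m - mxadj K.
  by apply/eqP; rewrite mulmxN -addr_eq0 -[_ + _]mxadjK e12 mxadj0.
rewrite e21 in rAB *; have A22u := full_rank_drsubmx_unit rAB.
exists (block_mx 1%:M (- (A12 *m invmx A22)) 0 (- invmx A22)), (A11 + A12 *m mxadj K).
split => //.
- rewrite unitmxE det_ublock det1 mul1r -unitmxE -scaleN1r unitmxZ ?unitrN1 //.
  by rewrite unitmx_inv.
- rewrite mulmx_block !mul1mx !mul0mx !add0r !mulNmx !mulmxN opprK !mulKmx //.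
  by rewrite -(mulmxA A12) mulKmx // mulmxKV // subrr opprK mulVmx.
- by rewrite mulmx_block !mul1mx !mul0mx !mulmx0 !addr0.
Qed.

Lemma pqrs_normal_form (C : numClosedFieldType) m a b (H : 'M[C]_(m + a))
  (K : 'M[C]_(m + a, b)) :
  selfadj H -> \rank H = m -> ulsubmx H \in unitmx ->
  exists (G : 'M[C]_(m + a + b)) P Q R S,
    [/\ G \in unitmx, S \in unitmx, selfadj S,
        G *m block_mx H 0 (mxadj K) (- 1%:M) = - Apqrs P Q R S &
        G *m block_mx 1%:M K 0 0 = Bpqrs P Q R].
Proof.
rewrite -[H]submxK; set H11 := ulsubmx H; set H12 := ursubmx H.
set H21 := dlsubmx H; set H22 := drsubmx H.
rewrite /selfadj mxadj_block => /eq_block_mx [sH11 eH21 _ _] rH H11u.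
rewrite block_mxKul in H11u.
have eH22 := schur_complement_eq0 H11u rH.
pose R := - (H21 *m invmx H11); pose P := usubmx K; pose Q := dsubmx K + R *m P.
exists (block_mx (block_mx 1%:M 0 R 1%:M) 0 0 1%:M), P, Q, R, (- H11); split.
- by rewrite block_diag_mx_unit unitmx1 andbT unitmxE det_lblock !det1 mulr1 unitr1.
- by rewrite -scaleN1r unitmxZ // unitrN1.
- by rewrite /selfadj mxadjN sH11.
- rewrite /Apqrs mulmx_block !mul0mx !mulmx0 !mul1mx !addr0 add0r !opp_block_mx.
  rewrite mulmx_block !mul1mx !mul0mx !addr0 add0r !oppr0 !opprK.
  congr block_mx; first congr block_mx.
  + rewrite /R mxadjN mxadjM mxadj_inv sH11 eH21 mulmxN mulNmx opprK.
    by rewrite mulmxA mulmxV // mul1mx.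
  + by rewrite /R mulNmx mulmxKV // addNr.
  + by rewrite eH22 /R !mulNmx addNr.
  + rewrite -[K]vsubmxK mxadj_col opp_row_mx opprK /Q /P.
    by rewrite opprD addrC addrNK mxadjN opprK.
- rewrite /Bpqrs mulmx_block !mul0mx !mulmx0 ?mul1mx ?mulmx1 !addr0 -[K in LHS]vsubmxK.
  by rewrite mul_block_col !mul1mx mul0mx addr0 addrC.
Qed.

Lemma admissible_equiv_normal_form (C : numClosedFieldType) r b (A B : 'M[C]_(r + b)) :
  admissible A B -> \rank B = r ->
  exists s H K, selfadj H /\
    perm_row_equiv s A B (block_mx H 0 (mxadj K) (- 1%:M)) (block_mx 1%:M K 0 0).
Proof.
move=> adm rB; have [s [G [K [Gu eB]]]] := rank_col_perm_form rB.
have equivG : perm_row_equiv s A B (G *m col_perm s A) (block_mx 1%:M K 0 0).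
  by exists G.
have [G' [H [G'u sH eA' eB']]] :=
  admissible_normal_form (admissible_perm_row_equiv equivG adm).
exists s, H, K; split => //; exists (G' *m G); first by rewrite unitmx_mul G'u.
by rewrite -!mulmxA eB eB'.
Qed.

Lemma selfadj_pqrs_form (C : numClosedFieldType) m a b (H : 'M[C]_(m + a))
  (K : 'M[C]_(m + a, b)) :
  selfadj H -> \rank H = m ->
  exists s P Q R S, [/\ S \in unitmx, selfadj S &
    perm_row_equiv s (block_mx H 0 (mxadj K) (- 1%:M)) (block_mx 1%:M K 0 0)
      (- Apqrs P Q R S) (Bpqrs P Q R)].
Proof.
move=> sH rH; have [f finj fu] := selfadj_principal_unit sH rH.
have [t tf] := perm_extend finj; have [s sE] := @col_perm_lsubmx C _ b t.
pose H' := perm_mx t *m H *m perm_mx t^-1; pose K' := perm_mx t *m K.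
have sH' : selfadj H' by rewrite /selfadj !mxadjM !mxadj_perm invgK sH mulmxA.
have rH' : \rank H' = m by rewrite mxrank_mul_unitr ?mxrank_mul_unitl ?unitmx_perm.
have H'u : ulsubmx H' \in unitmx.
  suff -> : ulsubmx H' = colsub f (rowsub f H) by [].
  by rewrite /H' -row_permE -col_permE; apply/matrixP => i j; rewrite !mxE !tf.
have [G [P [Q [R [S [Gu Su sS eA eB]]]]]] := pqrs_normal_form K' sH' rH' H'u.
exists s, P, Q, R, S; split => //.
exists (G *m block_mx (perm_mx t) 0 0 1%:M).
  by rewrite unitmx_mul Gu block_diag_mx_unit unitmx_perm unitmx1.
rewrite !sE !lsubmx_block !rsubmx_block !col_perm_col -!block_mxEh -!mulmxA.
rewrite !mulmx_block !mul0mx !mulmx0 !mul1mx ?addr0 ?add0r -eA -eB.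
rewrite /H' /K' mxadjM mxadj_perm !col_permE mul1mx -perm_mxM mulgV perm_mx1 mul0mx.
by rewrite mulmxA.
Qed.

Lemma admissible_pqrs_form (C : numClosedFieldType) m a b (A B : 'M[C]_(m + a + b)) :
  admissible A B -> \rank B = (m + a)%N -> \rank A = (m + b)%N ->
  exists s P Q R S, [/\ S \in unitmx, selfadj S &
    perm_row_equiv s A B (- Apqrs P Q R S) (Bpqrs P Q R)].
Proof.
move=> adm rB rA; have [s1 [H [K [sH equiv1]]]] := admissible_equiv_normal_form adm rB.
have rH : \rank H = m.
  have [G Gu [eA _]] := equiv1; move/(congr1 mxrank): eA.
  rewrite mxrank_mul_unitl // col_permE mxrank_mul_unitr ?unitmx_perm //.
  by rewrite rA mxrank_block_opp1 => /eqP; rewrite eqn_add2r => /eqP.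
have [s2 [P [Q [R [S [Su sS equiv2]]]]]] := selfadj_pqrs_form K sH rH.
exists (s2 * s1)%g, P, Q, R, S; split => //.
exact: perm_row_equiv_trans equiv1 equiv2.
Qed.

Section PqrsSolutions.
Variables (C : numClosedFieldType) (m a b : nat).
Implicit Types (P : 'M[C]_(m, b)) (Q : 'M[C]_(a, b)) (R : 'M[C]_(a, m)) (S : 'M[C]_m).

Lemma Bpqrs_mul_col P Q R (y1 : 'cV[C]_m) (y2 : 'cV[C]_a) (y3 : 'cV[C]_b) :
  Bpqrs P Q R *m col_mx (col_mx y1 y2) y3 =
  col_mx (col_mx (y1 + P *m y3) (R *m y1 + y2 + Q *m y3)) 0.
Proof.
by rewrite /Bpqrs !mul_block_col mul_col_mx add_col_mx !mul1mx !mul0mx !addr0.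
Qed.

Lemma Apqrs_mul_col P Q R S (x1 : 'cV[C]_m) (x2 : 'cV[C]_a) (x3 : 'cV[C]_b) :
  Apqrs P Q R S *m col_mx (col_mx x1 x2) x3 =
  col_mx (col_mx (S *m x1 - S *m mxadj R *m x2) 0)
         (- mxadj P *m x1 + mxadj (R *m P - Q) *m x2 + x3).
Proof. by rewrite /Apqrs !mul_block_col mul_row_col !mul0mx !mul1mx !addr0 mulNmx. Qed.

Lemma pqrs_inj P P' Q Q' R R' S S' : S \in unitmx ->
  (forall X Y : 'cV[C]_(m + a + b), Bpqrs P Q R *m Y = Apqrs P Q R S *m X ->
     Bpqrs P' Q' R' *m Y = Apqrs P' Q' R' S' *m X) ->
  [/\ P = P', Q = Q', R = R' & S = S'].
Proof.
move=> Su solP.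
have solx (x : 'cV[C]_m) : [/\ S *m x = S' *m x, mxadj P *m x = mxadj P' *m x
    & R' *m (S *m x) = R *m (S *m x)].
  have := solP (col_mx (col_mx x 0) (mxadj P *m x))
               (col_mx (col_mx (S *m x) (- (R *m (S *m x)))) 0).
  rewrite !Bpqrs_mul_col !Apqrs_mul_col !mulmx0 !addr0 subrr !mulNmx addNr !subr0.
  move=> /(_ erefl) /eq_col_mx [/eq_col_mx [eS eR] eP].
  split => //; apply/eqP; first by rewrite -subr_eq0 addrC -eP.
  by rewrite -subr_eq0 eR.
have eS : S = S' by apply: mulmx_cVP => x; case: (solx x).
have eP : P = P' by apply: mxadj_inj; apply: mulmx_cVP => x; case: (solx x).
have eR : R = R'.
  suff eRS : R' *m S = R *m S by rewrite -(mulmxK Su R) -eRS mulmxK.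
  by apply: mulmx_cVP => x; rewrite -!mulmxA; case: (solx x).
subst S' P' R'; split => //; apply: mulmx_cVP => y.
have := solP 0 (col_mx (col_mx (- (P *m y)) (R *m (P *m y) - Q *m y)) y).
rewrite !Bpqrs_mul_col !mulmx0 mulmxN addNr addrA addNr add0r addNr !col_mx0.
move=> /(_ erefl) /(congr1 (fun v => dsubmx (usubmx v))) /=.
rewrite col_mxKu col_mxKd !linear0 => /eqP.
by rewrite addrC subr_eq0 eq_sym => /eqP.
Qed.

End PqrsSolutions.

Theorem theorem1 (C : numClosedFieldType) (n : nat) (A B : 'M[C]_n) :
  admissible A B ->
  [/\ (n <= \rank A + \rank B)%N,
      exists s : 'S_n, exists P Q R S, pqrs_rep A B s P Q R S &
      forall (s : 'S_n) P Q R S P' Q' R' S',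
        pqrs_rep A B s P Q R S -> pqrs_rep A B s P' Q' R' S' ->
        [/\ P = P', Q = Q', R = R' & S = S']].
Proof.
move=> adm; have rn : (n <= \rank A + \rank B)%N.
  case: adm => rAB _; rewrite -{1}rAB -mxrank_tr tr_row_mx -(mxrank_tr A) -(mxrank_tr B).
  exact: mxrank_col_mx_le.
have := rank_leq_row A; have := rank_leq_row B => rBn rAn.
have eB : \rank B = (\rank A + \rank B - n + (n - \rank A))%N by lia.
have eA : \rank A = (\rank A + \rank B - n + (n - \rank B))%N by lia.
have en : (\rank A + \rank B - n + (n - \rank A) + (n - \rank B))%N = n by lia.
(* Generalizing the block sizes turns [n] into [m + a + b], so that the
   [conform_mx] casts in [pqrs_rep] become identities. *)
rewrite /pqrs_rep; move: (\rank A + \rank B - n)%N (n - \rank A)%N (n - \rank B)%N en eB eA.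
move=> m a b en eB eA; subst n.
have solution_eq (U V : 'cV[C]_(m + a + b)) : - U + V = 0 <-> V = U.
  by split=> [/eqP | ->]; [rewrite addrC subr_eq0 => /eqP | exact: addNr].
split => //.
  have [s [P [Q [R [S [Su sS equivs]]]]]] := admissible_pqrs_form adm eB eA.
  exists s, P, Q, R, S; split => // X Y.
  by rewrite !conform_mx_id (perm_row_equiv_solutions equivs) mulNmx solution_eq.
move=> s P Q R S P' Q' R' S' [Su _ solP] [_ _ solP'].
rewrite !conform_mx_id in solP solP'; apply: pqrs_inj Su _ => X Y e.
by rewrite -[X](row_permVK s) -[Y](row_permVK s) -solP' solP !row_permVK.
Qed.
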